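(* For a positive integer $k$, every graph $H$ with $|E(H)|\le\frac{1}{2}k(k+1)$ has an almost $k$-coloring.
   Context: A (proper) coloring $c$ of a graph $H$ is an almost $k$-coloring if either $c$ is a $k$-coloring of $H$ (uses at most $k$ colors), or $c$ is a $(k+1)$-coloring of $H$ in which at least one color class is a singleton set. *)

From mathcomp Require Import all_boot.
Set Implicit Arguments. Unset Strict Implicit. Unset Printing Implicit Defensive.

(* A finite simple graph: vertex type T : finType, adjacency e : rel T,
   assumed symmetric and irreflexive (stated as hypotheses in the theorem). *)

Definition edges (T : finType) (e : rel T) : {set {set T}} :=
  [set E : {set T} | [exists u, exists v, (u != v) && e u v && (E == [set u; v])]].

Definition proper (T : finType) (e : rel T) (c : T -> nat) : Prop :=
  forall u v, e u v -> c u != c v.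

Definition ncolors (T : finType) (c : T -> nat) : nat := size (undup [seq c x | x <- enum T]).

Definition color_class (T : finType) (c : T -> nat) (i : nat) : {set T} :=
  [set x | c x == i].

Definition almost_coloring (T : finType) (e : rel T) (k : nat) (c : T -> nat) : Prop :=
  proper e c /\
  (ncolors c <= k \/ (ncolors c <= k.+1 /\ exists i, #|color_class c i| = 1)).

From mathcomp Require Import all_boot.
From mathcomp Require Import zify.

Set Implicit Arguments.
Unset Strict Implicit.
Unset Printing Implicit Defensive.

(* Every graph with 2|E| < k(k+1) is properly k-colorable, by induction on k.
   For the step to k+1, a maximal stable set I dominates the other vertices,
   so besides the edges inside S \ I there are at least |S \ I| edges
   leaving it.  Either |S \ I| <= k and S \ I is colored injectively, or
   |S \ I| >= k+1 and 2|E(S \ I)| < (k+1)(k+2) - 2(k+1) = k(k+1), so the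
   induction hypothesis applies; in both cases I gets one new color.  For the
   theorem, delete one end u of some edge: what remains has strictly fewer
   edges, hence is k-colorable, and u alone receives color k. *)

Section Coloring.
Variables (T : finType) (e : rel T).
Hypothesis e_sym : symmetric e.
Hypothesis e_irr : irreflexive e.

Definition edges_in (S : {set T}) : {set {set T}} :=
  [set E in edges e | E \subset S].

Definition stable (I : {set T}) : bool :=
  [forall x in I, forall y in I, ~~ e x y].

Definition proper_on (S : {set T}) (c : T -> nat) : Prop :=
  forall u v, u \in S -> v \in S -> e u v -> c u != c v.

Definition colorable (S : {set T}) (k : nat) : Prop :=
  exists2 c : T -> nat, proper_on S c & forall x, x \in S -> c x < k.

Lemma edge_neq u v : e u v -> u != v.
Proof. by apply: contraTneq => ->; rewrite e_irr. Qed.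

Lemma edges_pair u v : e u v -> [set u; v] \in edges e.
Proof.
move=> euv; rewrite inE; apply/existsP; exists u; apply/existsP; exists v.
by rewrite edge_neq // euv eqxx.
Qed.

Lemma maximal_stable_dominating (S : {set T}) :
  exists2 I : {set T}, (I \subset S) && stable I &
    forall x, x \in S :\: I -> exists2 y, y \in I & e x y.
Proof.
pose P (I : {set T}) := (I \subset S) && stable I.
have P0 : P set0 by rewrite /P sub0set; apply/forallP => x; rewrite inE.
have [I PI maxI] := @arg_maxnP _ set0 P (fun J => #|J|) P0.
exists I => // x; rewrite inE => /andP[xI xS].
have [/existsP[y /andP[yI exy]] | no_nbr] := boolP [exists y in I, e x y].
  by exists y.
have [IS Istable] := andP PI.
have : P (x |: I).
  rewrite /P subUset sub1set xS IS /=.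
  have nbr z : z \in I -> ~~ e x z.
    by move=> zI; apply: contra no_nbr => exz; apply/existsP; exists z; rewrite zI.
  apply/forallP => a; apply/implyP; rewrite !inE => /orP[/eqP-> | aI].
    apply/forallP => b; apply/implyP; rewrite !inE => /orP[/eqP-> | /nbr //].
    by rewrite e_irr.
  apply/forallP => b; apply/implyP; rewrite !inE => /orP[/eqP-> | bI].
    by rewrite e_sym nbr.
  by move/forallP/(_ a): Istable; rewrite aI => /forallP/(_ b); rewrite bI.
by move=> /maxI /=; rewrite cardsU1 xI ltnn.
Qed.

(* Each x outside I contributes its own edge {x, f x} towards I; these edges
   are pairwise distinct and none of them lies inside S \ I. *)
Lemma edges_in_setD_dominated (S I : {set T}) :
  I \subset S -> (forall x, x \in S :\: I -> exists2 y, y \in I & e x y) ->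
  #|edges_in (S :\: I)| + #|S :\: I| <= #|edges_in S|.
Proof.
move=> IS dom.
pose f x := odflt x [pick y in I | e x y].
have fP x : x \in S :\: I -> f x \in I /\ e x (f x).
  move=> xSI; rewrite /f; case: pickP => [y /andP[]|] //= none.
  by have [y yI exy] := dom x xSI; move: (none y); rewrite yI exy.
pose g x := [set x; f x].
have g_inj : {in S :\: I &, injective g}.
  move=> x x' xSI x'SI gxx'.
  have : x \in g x' by rewrite -gxx' !inE eqxx.
  rewrite !inE => /orP[/eqP // | /eqP xf].
  by move: xSI; rewrite inE xf (fP x' x'SI).1.
have disj : [disjoint edges_in (S :\: I) & g @: (S :\: I)].
  rewrite -setI_eq0; apply/eqP/setP => E; rewrite !inE.
  apply/negP => /andP[/andP[_ ESI] /imsetP[x xSI Egx]].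
  move: ESI; rewrite Egx => /subsetP/(_ (f x)).
  by rewrite !inE eqxx orbT (fP x xSI).1 => /(_ isT).
move: disj; rewrite -setI_eq0 => /eqP disj.
rewrite -(card_in_imset g_inj) -cardsUI disj cards0 addn0.
apply: subset_leq_card; apply/subsetP => E; rewrite inE => /orP[|/imsetP[x xSI ->]].
  by rewrite !inE => /andP[-> ESI]; apply: subset_trans ESI (subsetDl _ _).
have [fI exf] := fP x xSI; rewrite inE edges_pair //=.
apply/subsetP => z; rewrite !inE => /orP[/eqP-> | /eqP->].
  by move: xSI; rewrite inE => /andP[].
exact: (subsetP IS).
Qed.

Lemma colorable_setD_stable (S I : {set T}) k :
  stable I -> colorable (S :\: I) k -> colorable S k.+1.
Proof.
move=> Istable [c0 c0_proper c0_lt].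
exists (fun x => if x \in I then k else c0 x) => [u v uS vS euv | x xS].
  have lt_k z : z \in S -> z \notin I -> c0 z < k.
    by move=> zS zI; apply: c0_lt; rewrite inE zI.
  case: ifP => uI; case: ifP => vI.
  - by move/forallP/(_ u): Istable; rewrite uI => /forallP/(_ v); rewrite vI euv.
  - by rewrite gtn_eqF ?lt_k ?vI.
  - by rewrite ltn_eqF ?lt_k ?uI.
  - by apply: c0_proper => //; rewrite inE ?uI ?vI.
by case: ifP => // xI; apply: ltnW; apply: c0_lt; rewrite inE xI.
Qed.

Lemma colorable_card (S : {set T}) : colorable S #|S|.
Proof.
exists (fun x => index x (enum S)) => [u v uS vS euv | x xS].
  apply: contraTneq euv => /(congr1 (nth u (enum S))).
  by rewrite !nth_index ?mem_enum // => ->; rewrite e_irr.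
by rewrite cardE index_mem mem_enum.
Qed.

Lemma colorable_leq (S : {set T}) k k' :
  k <= k' -> colorable S k -> colorable S k'.
Proof. by move=> kk' [c c_proper c_lt]; exists c => // x /c_lt/leq_trans; apply. Qed.

Lemma colorable_of_edges (S : {set T}) k :
  2 * #|edges_in S| < k * k.+1 -> colorable S k.
Proof.
elim: k S => [|k IHk] S hS; first by rewrite mul0n in hS.
have [I /andP[IS Istable] dom] := maximal_stable_dominating S.
have count := edges_in_setD_dominated IS dom.
apply: (colorable_setD_stable Istable).
have [small | big] := leqP #|S :\: I| k.
  exact: colorable_leq small (colorable_card _).
by apply: IHk; nia.
Qed.

Lemma edges_in_setD1_edge u v :
  e u v -> #|edges_in ([set: T] :\ u)| < #|edges e|.
Proof.
move=> euv; apply: proper_card; apply/properP; split.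
  by apply/subsetP => E; rewrite inE => /andP[].
exists [set u; v]; first exact: edges_pair.
rewrite inE negb_and orbC; apply/orP; left.
by apply/subsetPn; exists u; rewrite !inE eqxx.
Qed.

End Coloring.

Lemma ncolors_le (T : finType) (c : T -> nat) n :
  (forall x, c x < n) -> ncolors c <= n.
Proof.
move=> c_lt; rewrite /ncolors -[n in _ <= n](size_iota 0 n).
apply: uniq_leq_size (undup_uniq _) _ => y.
by rewrite mem_undup => /mapP[x _ ->]; rewrite mem_iota add0n c_lt.
Qed.

Lemma almost_coloring_setD1 (T : finType) (e : rel T) k u :
  irreflexive e -> colorable e ([set: T] :\ u) k ->
  exists c : T -> nat, almost_coloring e k c.
Proof.
move=> e_irr [c c_proper c_lt].
have lt_k x : x != u -> c x < k by move=> xu; apply: c_lt; rewrite !inE xu.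
pose c' x := if x == u then k else c x.
have c'_class : color_class c' k = [set u].
  apply/setP => x; rewrite !inE /c'.
  by case: (x =P u) => [_ | /eqP xu]; rewrite ?eqxx // ltn_eqF ?lt_k.
exists c'; split.
  move=> a b eab; rewrite /c'; case: (a =P u) => [au | /eqP au]; case: (b =P u) => [bu | /eqP bu].
  - by move: eab; rewrite au bu e_irr.
  - by rewrite gtn_eqF ?lt_k.
  - by rewrite ltn_eqF ?lt_k.
  - by apply: c_proper => //; rewrite !inE ?au ?bu.
right; split; last by exists k; rewrite c'_class cards1.
by apply: ncolors_le => x; rewrite /c'; case: (x =P u) => [// | /eqP/lt_k/ltnW].
Qed.

Theorem lemma3 (k : nat) (T : finType) (e : rel T) :
  0 < k -> symmetric e -> irreflexive e ->
  2 * #|edges e| <= k * k.+1 ->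
  exists c : T -> nat, almost_coloring e k c.
Proof.
move=> k_gt0 e_sym e_irr hE.
case: (pickP (fun p : T * T => e p.1 p.2)) => [[u v] /= euv | no_edge].
  apply: (almost_coloring_setD1 (u := u) e_irr).
  apply: colorable_of_edges => //.
  by apply: leq_trans hE; rewrite ltn_mul2l /= (edges_in_setD1_edge e_irr euv).
exists (fun _ => 0); split.
  by move=> a b eab; move: (no_edge (a, b)); rewrite /= eab.
by left; apply: ncolors_le.
Qed.
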